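(* Let $p\in\{2,3\}$. Then for every integer $d\ge 1$, the directed graph $G_d$ is connected (as an undirected graph).
   Context: Fix a prime $p$ and an integer $d\ge1$. Let $\Omega_d$ be the set of partitions (unordered multisets) of $d+2$ into positive integers $e_1,e_2,\ldots$ with each $e_j\not\equiv 1\pmod p$. For $\vec E,\vec E'\in\Omega_d$ write $\vec E\prec\vec E'$ if $\vec E'$ is a refinement of $\vec E$ (i.e. $\vec E'$ is obtained by replacing each entry of $\vec E$ by a multiset of positive integers summing to it). $G_d$ is the directed graph with vertex set $\Omega_d$ and an edge from $\vec E$ to $\vec E'$ if and only if $\vec E\prec\vec E'$, $\vec E\neq\vec E'$, and there is no partition in $\Omega_d$ lying strictly between them. *)

From mathcomp Require Import all_boot.
From Stdlib Require Import Relations.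
Set Implicit Arguments. Unset Strict Implicit. Unset Printing Implicit Defensive.

(* A partition (unordered multiset of positive integers) is represented
   canonically as a non-increasing sequence of positive naturals. *)

Definition in_Omega (p d : nat) (E : seq nat) : bool :=
  [&& sorted geq E, all (fun e => 0 < e) E, sumn E == d + 2
    & all (fun e => e %% p != 1 %% p) E].

Definition refines (E E' : seq nat) : Prop :=
  exists ss : seq (seq nat), map sumn ss = E /\ perm_eq (flatten ss) E'.

Definition Gedge (p d : nat) (E E' : seq nat) : Prop :=
  [/\ in_Omega p d E, in_Omega p d E', refines E E', E <> E' &
    ~ (exists F, [/\ in_Omega p d F, refines E F, refines F E', F <> E & F <> E'])].

Definition Gconnected (p d : nat) : Prop :=
  forall E E', in_Omega p d E -> in_Omega p d E' ->
    clos_refl_trans (seq nat) (fun a b => Gedge p d a b \/ Gedge p d b a) E E'.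

From mathcomp Require Import all_boot zify.
From Stdlib Require Import Relations Classical.

Set Implicit Arguments.
Unset Strict Implicit.
Unset Printing Implicit Defensive.

(* Refinement inside Omega_d is a finite chain of edges of G_d, so it suffices
   to connect refinements.  Every part of a partition in Omega_d is at least 2,
   hence splits into 2s and 3s, and these stay admissible; so every vertex is
   joined to a partition into 2s and 3s.  For p = 2 all parts are even, and the
   only such partition is 2 + ... + 2.  For p = 3 any two of them are joined by
   repeatedly trading 3 + 3 for 2 + 2 + 2 through the coarser partition with a
   part 6, which is admissible because 6 is not 1 mod 3. *)

Definition Greach (p d : nat) : relation (seq nat) :=
  clos_refl_trans (seq nat) (fun E F => Gedge p d E F \/ Gedge p d F E).

Lemma Greach_sym p d E F : Greach p d E F -> Greach p d F E.
Proof.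
elim=> [{}E {}F edge | {}E | E1 E2 E3 _ R21 _ R32].
- by apply: rt_step; tauto.
- exact: rt_refl.
- exact: rt_trans R32 R21.
Qed.

Lemma geq_trans : @ssrbool.transitive nat geq.
Proof. exact: rev_trans leq_trans. Qed.

Lemma geq_anti : @ssrbool.antisymmetric nat geq.
Proof. by move=> m n le_mn; apply: anti_leq; rewrite andbC. Qed.

Lemma refines_sumn E F : refines E F -> sumn E = sumn F.
Proof. by case=> ss [<- /perm_sumn <-]; rewrite sumn_flatten. Qed.

Lemma refines_perm E F F' : refines E F -> perm_eq F F' -> refines E F'.
Proof. by case=> ss [Ess pF] pFF'; exists ss; rewrite (perm_trans pF pFF'). Qed.

Lemma refines_cons x s E : sumn s = x -> refines (x :: E) (s ++ E).
Proof.
move=> sum_s; exists (s :: [seq [:: e] | e <- E]).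
by rewrite /= flatten_seq1 sum_s -map_comp map_id_in // => e _ /=; rewrite addn0.
Qed.

Lemma size_flatten_blocks (ss : seq (seq nat)) :
  all (fun s => 0 < sumn s) ss -> size ss <= size (flatten ss).
Proof.
elim: ss => //= s ss IH /andP[s_pos /IH]; rewrite size_cat.
by case: s s_pos => //= x s _; lia.
Qed.

Lemma flatten_blocks_eq (ss : seq (seq nat)) :
  all (fun s => 0 < sumn s) ss -> size (flatten ss) = size ss ->
  flatten ss = map sumn ss.
Proof.
elim: ss => //= s ss IH /andP[s_pos ss_pos]; rewrite size_cat.
have := size_flatten_blocks ss_pos.
case: s s_pos => [|x [|y s]] //= _; last by lia.
by move=> _ [/IH ->]; rewrite ?addn0.
Qed.

Lemma refines_size_ltn E F :
  sorted geq E -> sorted geq F -> all (fun e => 0 < e) E ->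
  refines E F -> E <> F -> size E < size F.
Proof.
move=> sE sF E_pos [ss [Ess pF]] neEF.
have ss_pos : all (fun s => 0 < sumn s) ss by move: E_pos; rewrite -Ess all_map.
rewrite -(perm_size pF) -Ess size_map ltn_neqAle size_flatten_blocks // andbT.
apply/eqP => eq_size; apply: neEF; apply: (sorted_eq geq_trans geq_anti sE sF).
by rewrite -Ess -(flatten_blocks_eq ss_pos).
Qed.

(* Induction on the number of parts, which grows along proper refinements. *)
Lemma refines_Greach p d E F :
  in_Omega p d E -> in_Omega p d F -> refines E F -> Greach p d E F.
Proof.
have ltn_size G G' : in_Omega p d G -> in_Omega p d G' -> refines G G' ->
    G <> G' -> size G < size G'.
  by case/and4P=> sG G_pos _ _ /and4P[sG' _ _ _]; apply: refines_size_ltn.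
have [n] := ubnP (size F - size E); elim: n E F => // n IH E F lt_n HE HF rEF.
have [-> | /eqP neEF] := eqVneq E F; first exact: rt_refl.
case: (classic (exists G, [/\ in_Omega p d G, refines E G, refines G F,
                              G <> E & G <> F])) => [[G [HG rEG rGF neGE neGF]] | no_mid].
- have ltEG := ltn_size _ _ HE HG rEG (nesym neGE).
  have ltGF := ltn_size _ _ HG HF rGF neGF.
  by apply: (rt_trans _ _ _ G); apply: IH => //; lia.
- by apply: rt_step; left; split.
Qed.

Definition admissible p e := e %% p != 1 %% p.

Definition twos_threes a b := nseq b 3 ++ nseq a 2.

Lemma sorted_twos_threes a b : sorted geq (twos_threes a b).
Proof.
elim: b => [|b IH] /=; first by case: a => //= a; elim: a.
by rewrite (path_sortedE geq_trans) IH all_cat !all_nseq !orbT.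
Qed.

Lemma sumn_twos_threes a b : sumn (twos_threes a b) = 2 * a + 3 * b.
Proof. by rewrite sumn_cat !sumn_nseq; lia. Qed.

Lemma twos_threes_admissible p a b :
  admissible p 2 -> admissible p 3 -> all (admissible p) (twos_threes a b).
Proof. by move=> adm2 adm3; rewrite all_cat !all_nseq adm2 adm3 !orbT. Qed.

Lemma twos_threes_in_Omega p d a b :
  admissible p 2 -> admissible p 3 -> 2 * a + 3 * b = d + 2 ->
  in_Omega p d (twos_threes a b).
Proof.
move=> adm2 adm3 sum_ab; apply/and4P; split.
- exact: sorted_twos_threes.
- by rewrite all_cat !all_nseq !orbT.
- by rewrite sumn_twos_threes sum_ab.
- exact: twos_threes_admissible.
Qed.

Lemma perm_twos_threes s : all (mem [:: 2; 3]) s ->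
  perm_eq s (twos_threes (count_mem 2 s) (count_mem 3 s)).
Proof.
move=> s23; apply/permP => P; rewrite count_cat !count_nseq.
elim: s s23 => [|x s IH] /=; first by rewrite !muln0.
by case/andP=> /predU1P[-> | /predU1P[-> | //]] /IH -> /=; case: (P 2); case: (P 3); lia.
Qed.

Definition split23 e := twos_threes ((e - 3 * odd e) %/ 2) (odd e).

Lemma sumn_split23 e : 1 < e -> sumn (split23 e) = e.
Proof. by rewrite sumn_twos_threes; case: (odd e) (modn2 e); lia. Qed.

(* An admissible e excludes p = 1, and an odd admissible e excludes p = 2. *)
Lemma split23_admissible p e : admissible p e -> all (admissible p) (split23 e).
Proof.
rewrite all_cat !all_nseq /admissible.
case: p => [|[|[|[|p]]]].
- by rewrite !modn0 !orbT.
- by rewrite !modn1.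
- by rewrite !modn2 /= orbT; case: (odd e).
- by rewrite /= !orbT.
- by move=> _; rewrite !modn_small ?orbT.
Qed.

Lemma in_Omega_refines_twos_threes p d E : in_Omega p d E ->
  exists a b, in_Omega p d (twos_threes a b) /\ refines E (twos_threes a b).
Proof.
case/and4P=> _ E_pos sumE E_adm.
have E_gt1 : all (leq 2) E.
  apply/allP => e eE; move/allP/(_ e eE): E_pos; move/allP/(_ e eE): E_adm.
  by case: e {eE} => [|[|e]] //; rewrite eqxx.
set S := flatten (map split23 E).
have rES : refines E S.
  exists (map split23 E); split => //.
  by rewrite -map_comp -[RHS]map_id; apply/eq_in_map => e /(allP E_gt1) /sumn_split23.
have S23 : all (mem [:: 2; 3]) S.
  apply/allP => x /flattenP[_ /mapP[e _ ->]].
  by rewrite mem_cat => /orP[] /nseqP[-> _].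
have S_adm : all (admissible p) S.
  apply/allP => x /flattenP[_ /mapP[e eE ->]]; apply/allP: x.
  exact/split23_admissible/(allP E_adm).
have pS := perm_twos_threes S23.
exists (count_mem 2 S), (count_mem 3 S); split; last exact: refines_perm pS.
apply/and4P; split.
- exact: sorted_twos_threes.
- by rewrite all_cat !all_nseq !orbT.
- by rewrite -(perm_sumn pS) -(refines_sumn rES).
- by rewrite -(perm_all _ pS).
Qed.

Lemma twos_threes_in_Omega2 d a b :
  in_Omega 2 d (twos_threes a b) -> twos_threes a b = nseq (d + 2)./2 2.
Proof.
case/and4P=> _ _ /eqP; rewrite sumn_twos_threes => sum_ab.
rewrite all_cat all_nseq /= orbF => /andP[/eqP b0 _].
by rewrite /twos_threes b0 /=; congr nseq; lia.
Qed.

(* Both sides refine the partition obtained by merging 3 + 3, or 2 + 2 + 2, into 6. *)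
Lemma Greach_threes_to_twos p d a b :
  admissible p 2 -> admissible p 3 -> admissible p 6 ->
  2 * a + 3 * b.+2 = d + 2 ->
  Greach p d (twos_threes a b.+2) (twos_threes (a + 3) b).
Proof.
move=> adm2 adm3 adm6 sum_ab.
have H6 : in_Omega p d (6 :: twos_threes a b).
  apply/and4P; split.
  - by rewrite /= (path_sortedE geq_trans) sorted_twos_threes all_cat !all_nseq !orbT.
  - by rewrite /= all_cat !all_nseq !orbT.
  - by rewrite /= sumn_twos_threes; apply/eqP; lia.
  - by rewrite /= [_ != _]adm6 twos_threes_admissible.
have r33 : refines (6 :: twos_threes a b) (twos_threes a b.+2).
  exact: (@refines_cons 6 [:: 3; 3]).
have r222 : refines (6 :: twos_threes a b) (twos_threes (a + 3) b).
  apply: refines_perm (refines_cons _ (erefl : sumn [:: 2; 2; 2] = 6)) _.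
  by rewrite /twos_threes nseqD perm_catCA perm_cat2l perm_catC.
apply: (rt_trans _ _ _ _ _ (Greach_sym (refines_Greach H6 _ r33))).
- exact: twos_threes_in_Omega adm2 adm3 sum_ab.
- by apply: refines_Greach H6 _ r222; apply: (twos_threes_in_Omega adm2 adm3); lia.
Qed.

Lemma Greach_twos_threes p d a b a' b' :
  admissible p 2 -> admissible p 3 -> admissible p 6 ->
  2 * a + 3 * b = d + 2 -> 2 * a' + 3 * b' = d + 2 ->
  Greach p d (twos_threes a b) (twos_threes a' b').
Proof.
move=> adm2 adm3 adm6.
have to_normal k a0 r : 2 * a0 + 3 * (k * 2 + r) = d + 2 ->
    Greach p d (twos_threes a0 (k * 2 + r)) (twos_threes (a0 + 3 * k) r).
  elim: k a0 => [|k IH] a0 sum_a0; first by rewrite addn0; apply: rt_refl.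
  have -> : k.+1 * 2 + r = (k * 2 + r).+2 by lia.
  have -> : a0 + 3 * k.+1 = a0 + 3 + 3 * k by lia.
  apply: rt_trans (Greach_threes_to_twos adm2 adm3 adm6 _) (IH _ _); lia.
have reach_normal a0 b0 : 2 * a0 + 3 * b0 = d + 2 ->
    Greach p d (twos_threes a0 b0) (twos_threes (a0 + 3 * (b0 %/ 2)) (b0 %% 2)).
  by move=> sum0; have := to_normal (b0 %/ 2) a0 (b0 %% 2); rewrite -divn_eq; apply.
move=> sum_ab sum_ab'.
apply: rt_trans (reach_normal _ _ sum_ab) (Greach_sym _).
have -> : b %% 2 = b' %% 2 by lia.
have -> : a + 3 * (b %/ 2) = a' + 3 * (b' %/ 2) by lia.
exact: reach_normal.
Qed.

Theorem proposition2p6 (p : nat) : (p = 2 \/ p = 3) ->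
  forall d : nat, 1 <= d -> Gconnected p d.
Proof.
move=> p23 d _ E E' HE HE'.
have [a [b [HF rEF]]] := in_Omega_refines_twos_threes HE.
have [a' [b' [HF' rEF']]] := in_Omega_refines_twos_threes HE'.
apply: (rt_trans _ _ _ _ _ (refines_Greach HE HF rEF)).
apply: (rt_trans _ _ _ _ _ _ (Greach_sym (refines_Greach HE' HF' rEF'))).
case: p23 => p_eq; subst p.
- by rewrite (twos_threes_in_Omega2 HF) (twos_threes_in_Omega2 HF'); apply: rt_refl.
- move: HF HF' => /and4P[_ _ /eqP + _] /and4P[_ _ /eqP + _].
  by rewrite !sumn_twos_threes; apply: Greach_twos_threes.
Qed.
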